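(* Let $(M,g)$ be a semi-Riemannian manifold with Levi-Civita connection $\overset{\circ}{\nabla}$, and let $\nabla$ be an affine connection of the form $\nabla_XY=\overset{\circ}{\nabla}_XY+U(-,X,Y)$, where $U$ is a $(1,2)$-tensor field. Define $S(A,X,Y):=U(A^\flat,X,Y)$ for vector fields $A,X,Y$. Then the following are equivalent: (i) $(U,\nabla)$ is a Schrödinger connection; (ii) for all vector fields $A,X,Y$, $S(A,X,Y)=S(A,Y,X)$ and $S(A,X,Y)+S(Y,A,X)+S(X,Y,A)=0$.
   Context: Musical isomorphisms: $X^\flat=g(X,-)$, $\omega^\sharp=g^{-1}(\omega,-)$. For a $(1,2)$-tensor field $U$, $U(-,X,Y)$ denotes the vector field with $\omega(U(-,X,Y))=U(\omega,X,Y)$. The pair $(U,\nabla)$ with $\nabla_XY=\overset{\circ}{\nabla}_XY+U(-,X,Y)$ is called a Schrödinger connection if for all vector fields $X,Y$ and one-forms $\omega$: (a) $U(\omega,X,Y)=U(\omega,Y,X)$, and (b) $U(\omega,X,Y)+U(\omega,Y,X)+U(X^\flat,\omega^\sharp,Y)+U(X^\flat,Y,\omega^\sharp)+U(Y^\flat,\omega^\sharp,X)+U(Y^\flat,X,\omega^\sharp)=0$. *)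

(* Pointwise (tangent-space) model of the tensor calculus:
   vectors are column vectors 'cV[R]_n, one-forms are row vectors 'rV[R]_n,
   the pairing omega(X) is the 1x1 matrix product, the metric is a symmetric
   invertible matrix G. *)
From mathcomp Require Import all_boot all_order all_algebra.
Set Implicit Arguments. Unset Strict Implicit. Unset Printing Implicit Defensive.
Import GRing.Theory Num.Theory.
Local Open Scope ring_scope.

Section Defs.
Variables (R : realFieldType) (n : nat).

Definition metric (G : 'M[R]_n) : Prop := G^T = G /\ G \in unitmx.

Definition flat (G : 'M[R]_n) (X : 'cV[R]_n) : 'rV[R]_n := (G *m X)^T.
Definition sharp (G : 'M[R]_n) (w : 'rV[R]_n) : 'cV[R]_n := invmx G *m w^T.

Definition trilinear (U : 'rV[R]_n -> 'cV[R]_n -> 'cV[R]_n -> R) : Prop :=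
  [/\ (forall X Y a w1 w2, U (a *: w1 + w2) X Y = a * U w1 X Y + U w2 X Y),
      (forall w Y a X1 X2, U w (a *: X1 + X2) Y = a * U w X1 Y + U w X2 Y) &
      (forall w X a Y1 Y2, U w X (a *: Y1 + Y2) = a * U w X Y1 + U w X Y2)].

Definition schrodinger (G : 'M[R]_n) (U : 'rV[R]_n -> 'cV[R]_n -> 'cV[R]_n -> R) : Prop :=
  (forall w X Y, U w X Y = U w Y X) /\
  (forall w X Y,
     U w X Y + U w Y X + U (flat G X) (sharp G w) Y + U (flat G X) Y (sharp G w)
     + U (flat G Y) (sharp G w) X + U (flat G Y) X (sharp G w) = 0).

Definition Sform (G : 'M[R]_n) (U : 'rV[R]_n -> 'cV[R]_n -> 'cV[R]_n -> R)
  (A X Y : 'cV[R]_n) : R := U (flat G A) X Y.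

End Defs.

(* Since the metric is nondegenerate, flat is a bijection with inverse sharp,
   so quantifying over one-forms w is the same as quantifying over w = A^flat.
   Condition (a) then reads as the symmetry of S, and under (a) the six terms
   of (b) at w = A^flat pair up into twice the cyclic sum
   S(A,X,Y) + S(Y,A,X) + S(X,Y,A). *)
From mathcomp Require Import all_boot all_order all_algebra.
From mathcomp Require Import ring.
Set Implicit Arguments. Unset Strict Implicit.
Import GRing.Theory Num.Theory.
Local Open Scope ring_scope.

Section Musical.
Variables (R : realFieldType) (n : nat) (G : 'M[R]_n).
Hypothesis G_unit : G \in unitmx.

Lemma sharpK : cancel (sharp G) (flat G).
Proof. by move=> w; rewrite /flat /sharp mulmxA mulmxV // mul1mx trmxK. Qed.

Lemma flatK : cancel (flat G) (sharp G).
Proof. by move=> X; rewrite /flat /sharp trmxK mulmxA mulVmx // mul1mx. Qed.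

Variable U : 'rV[R]_n -> 'cV[R]_n -> 'cV[R]_n -> R.

Lemma symmetric_U_Sform :
  (forall w X Y, U w X Y = U w Y X) <->
  (forall A X Y, Sform G U A X Y = Sform G U A Y X).
Proof.
split=> symU w X Y; first exact: symU.
by rewrite -(sharpK w); apply: symU.
Qed.

Lemma schrodinger_sum_flat (symU : forall w X Y, U w X Y = U w Y X) A X Y :
  let w := flat G A in
  U w X Y + U w Y X + U (flat G X) (sharp G w) Y + U (flat G X) Y (sharp G w)
  + U (flat G Y) (sharp G w) X + U (flat G Y) X (sharp G w)
  = 2 * (Sform G U A X Y + Sform G U Y A X + Sform G U X Y A).
Proof.
rewrite /= flatK /Sform (symU _ Y X) (symU (flat G X) Y A) (symU (flat G Y) X A).
ring.
Qed.

End Musical.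

Theorem mainTheorem2 (R : realFieldType) (n : nat) (G : 'M[R]_n)
  (U : 'rV[R]_n -> 'cV[R]_n -> 'cV[R]_n -> R) :
  metric G -> trilinear U ->
  (schrodinger G U <->
   ((forall A X Y, Sform G U A X Y = Sform G U A Y X) /\
    (forall A X Y, Sform G U A X Y + Sform G U Y A X + Sform G U X Y A = 0))).
Proof.
move=> [_ G_unit] _.
have twice_eq0 (x : R) : (2 * x == 0) = (x == 0) by rewrite mulf_eq0 pnatr_eq0.
split=> [[symU cond_b] | [symS cyclicS]].
  split; first exact/(symmetric_U_Sform G_unit).
  move=> A X Y; apply/eqP; rewrite -twice_eq0.
  by rewrite -(schrodinger_sum_flat G_unit symU) cond_b.
have /(symmetric_U_Sform G_unit) symU := symS.
split=> // w X Y; rewrite -(sharpK G_unit w).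
by rewrite (schrodinger_sum_flat G_unit symU) cyclicS mulr0.
Qed.
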